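(* For all integers $m\ge 2$ and $n\ge 1$, the stacked prism $Y_{2^m,n}$ is odd prime.
   Context: All graphs are finite and simple. A graph $G$ of order $N$ is odd prime if there is a bijection $\ell:V(G)\to\{1,3,\ldots,2N-1\}$ with $\gcd(\ell(u),\ell(v))=1$ for every edge $uv$. For $k\ge 3$, $n\ge 1$, the stacked prism $Y_{k,n}$ is the Cartesian product $C_k\,\square\,P_n$ of a $k$-cycle and a path on $n$ vertices: vertices $v_{i,j}$ ($1\le i\le n$, $1\le j\le k$), with edges $v_{i,j}v_{i,j+1}$ ($1\le j\le k-1$), $v_{i,k}v_{i,1}$ for each $i$, and $v_{i,j}v_{i+1,j}$ for $1\le i\le n-1$, $1\le j\le k$. *)

From mathcomp Require Import all_boot.
Set Implicit Arguments. Unset Strict Implicit. Unset Printing Implicit Defensive.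

Definition simple_graph (T : finType) (e : rel T) : Prop :=
  symmetric e /\ irreflexive e.

Definition odd_prime_labeling (T : finType) (e : rel T) (l : T -> nat) : Prop :=
  [/\ injective l,
      (forall v, odd (l v) /\ l v < 2 * #|T|),
      (forall x, odd x -> x < 2 * #|T| -> exists v, l v = x) &
      (forall u v, e u v -> coprime (l u) (l v))].

Definition odd_prime (T : finType) (e : rel T) : Prop :=
  exists l : T -> nat, odd_prime_labeling e l.

(* Stacked prism Y_{k,n} = C_k □ P_n; vertex (i,j) with i : 'I_n (layer),
   j : 'I_k (position on the cycle); 0-indexed version of v_{i+1,j+1}. *)
Definition cyc_adj (k : nat) (a b : 'I_k) : bool :=
  (b == (a + 1) %% k :> nat) || (a == (b + 1) %% k :> nat).

Definition path_adj (n : nat) (a b : 'I_n) : bool :=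
  (b == a.+1 :> nat) || (a == b.+1 :> nat).

Definition prism_adj (k n : nat) : rel ('I_n * 'I_k) :=
  fun x y => ((x.1 == y.1) && cyc_adj x.2 y.2) || ((x.2 == y.2) && path_adj x.1 y.1).

Arguments prism_adj k n : clear implicits.

(* Number the vertices of Y_{2^m,n} layer by layer, and within a layer walk
   around the cycle in the zigzag order 0, 2, 4, ..., k-2, k-1, k-3, ..., 1;
   vertex number i gets the label 2i+1.  Adjacent vertices then receive
   numbers 1, 2 or k = 2^m apart, so their labels differ by a power of 2, and
   two odd numbers differing by a power of 2 are coprime. *)

From mathcomp Require Import all_boot zify.

Definition pow2_apart (a b : nat) : Prop :=
  exists t, a + 2 ^ t = b \/ b + 2 ^ t = a.

Lemma pow2_apartC a b : pow2_apart a b -> pow2_apart b a.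
Proof. by case=> t [ab | ba]; exists t; [right | left]. Qed.

Lemma pow2_apartDl c a b : pow2_apart a b -> pow2_apart (c + a) (c + b).
Proof. by case=> t [ab | ba]; exists t; [left | right]; lia. Qed.

Lemma pow2_apart_double a b : pow2_apart a b -> pow2_apart a.*2.+1 b.*2.+1.
Proof. by case=> t [ab | ba]; exists t.+1; rewrite expnS; [left | right]; lia. Qed.

Lemma coprime_pow2_apart a b : odd a -> pow2_apart a b -> coprime a b.
Proof.
move=> odd_a [t ab_or_ba].
have : coprime a (2 ^ t) by apply: coprimeXr; rewrite coprimen2.
case: ab_or_ba => <- coprime_a_pow2; first by rewrite /coprime gcdnDl.
by rewrite coprime_sym /coprime gcdnDl gcdnC -gcdnDr gcdnC.
Qed.

Lemma odd_prime_of_pow2_apart (T : finType) (e : rel T) (f : T -> nat) :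
    injective f -> (forall v, f v < #|T|) ->
    (forall u v, e u v -> pow2_apart (f u) (f v)) ->
  odd_prime e.
Proof.
move=> f_inj f_lt f_adj; exists (fun v => (f v).*2.+1); split.
- by move=> u v /succn_inj/double_inj/f_inj.
- by move=> v; split; [rewrite /= odd_double | have := f_lt v; lia].
- move=> x odd_x x_lt.
  have half_lt : x./2 < #|T| by lia.
  pose g v : 'I_#|T| := Ordinal (f_lt v).
  have g_inj : injective g by move=> u v /(congr1 val)/f_inj.
  have /codomP[v gv] := inj_card_onto g_inj (eq_leq (card_ord _)) (Ordinal half_lt).
  exists v; move/(congr1 val): gv => /= <-.
  by have := odd_double_half x; rewrite odd_x -addn1 addnC.
- move=> u v /f_adj/pow2_apart_double; apply: coprime_pow2_apart.
  by rewrite /= odd_double.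
Qed.

Section Zigzag.

Variable k : nat.
Hypothesis k_even : ~~ odd k.

Definition zigzag (j : nat) : nat :=
  if j < k./2 then j.*2 else (k - 1 - j).*2.+1.

Let k_half : k = k./2.*2.
Proof. by have := odd_double_half k; rewrite (negbTE k_even). Qed.

Lemma zigzag_lt j : j < k -> zigzag j < k.
Proof. by rewrite /zigzag; case: ifP; lia. Qed.

Lemma zigzag_inj : {in gtn k &, injective zigzag}.
Proof. by move=> i j /[!inE] ik jk; rewrite /zigzag; do 2!case: ifP; lia. Qed.

Lemma zigzag_succ j : j < k -> pow2_apart (zigzag j) (zigzag ((j + 1) %% k)).
Proof.
move=> jk; have [j1k | ] := ltnP (j + 1) k.
  rewrite modn_small // /zigzag.
  by do 2!case: ifP => ?; [exists 1 | exists 0 | lia | exists 1]; lia.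
move=> kj1; have -> : j + 1 = k by lia.
by rewrite modnn /zigzag; do 2!case: ifP => ?; exists 0; lia.
Qed.

End Zigzag.

Section PrismNumbering.

Variables m n : nat.
Hypothesis m_gt0 : 0 < m.
Local Notation k := (2 ^ m).

Definition prism_index (x : 'I_n * 'I_k) : nat := x.1 * k + zigzag k x.2.

Let k_even : ~~ odd k.
Proof. by rewrite oddX orbF -lt0n. Qed.

Let zigzag_ord_lt (j : 'I_k) : zigzag k j < k.
Proof. exact: zigzag_lt. Qed.

Lemma prism_index_lt x : prism_index x < #|{: 'I_n * 'I_k}|.
Proof.
case: x => i j; rewrite card_prod !card_ord /prism_index /=.
have := zigzag_ord_lt j; have := ltn_ord i; nia.
Qed.

Lemma prism_index_inj : injective prism_index.
Proof.
move=> [i j] [i' j']; rewrite /prism_index /= => eq_index.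
have k_gt0 : 0 < k by rewrite expn_gt0.
have := congr1 (divn^~ k) eq_index; have := congr1 (modn^~ k) eq_index.
rewrite !modnMDl !divnMDl // !modn_small // !divn_small // !addn0.
move=> /(@zigzag_inj _ k_even) eq_j /val_inj ->.
by congr pair; apply: val_inj; apply: eq_j; rewrite inE.
Qed.

Lemma prism_index_adj x y :
  prism_adj k n x y -> pow2_apart (prism_index x) (prism_index y).
Proof.
case: x y => [i j] [i' j']; rewrite /prism_adj /prism_index /=.
case/orP=> /andP[/eqP <- adj].
  apply: pow2_apartDl; case/orP: adj => /eqP ->.
    exact: zigzag_succ.
  exact/pow2_apartC/zigzag_succ.
exists m; case/orP: adj => /eqP ->; rewrite mulSn; [left | right]; lia.
Qed.

End PrismNumbering.

Theorem theorem3p9 (m n : nat) : 2 <= m -> 1 <= n ->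
  @odd_prime _ (prism_adj (2 ^ m) n).
Proof.
move=> m_ge2 _; have m_gt0 : 0 < m by apply: leq_trans m_ge2.
apply: (@odd_prime_of_pow2_apart _ _ (prism_index m n)).
- exact: prism_index_inj.
- exact: prism_index_lt.
exact: prism_index_adj.
Qed.
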